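(* Let $(X,d)$ be a metric space with $|X|\geqslant 3$ and let $T\colon X\to X$ satisfy $$d(Tx,Ty)\leqslant a\,d(x,y)+b\,d(x,Tx)+c\,d(y,Ty)\quad\text{for all } x,y\in X,$$ where $a,b,c\geqslant 0$ and $2a+\frac{3}{2}(b+c)<1$. Then $T$ is a generalized Ćirić–Reich–Rus type mapping on $X$, i.e. there exist $\alpha,\lambda\geqslant 0$ with $2\alpha+\frac{3\lambda}{2}<1$ such that $$d(Tx,Ty)+d(Ty,Tz)+d(Tx,Tz)\leqslant \alpha\big(d(x,y)+d(y,z)+d(z,x)\big)+\lambda\big(d(x,Tx)+d(y,Ty)+d(z,Tz)\big)$$ for all pairwise distinct $x,y,z\in X$.
   Context: A Ćirić–Reich–Rus (ĆRR) type mapping is a self-map $T$ of a metric space satisfying $d(Tx,Ty)\leqslant a\,d(x,y)+b\,d(x,Tx)+c\,d(y,Ty)$ for all $x,y$, with $a,b,c\geqslant0$, $a+b+c<1$ (the hypothesis $2a+\frac32(b+c)<1$ implies $a+b+c<1$). *)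

From Stdlib Require Import Reals.
Open Scope R_scope.

Definition is_metric {X : Type} (d : X -> X -> R) : Prop :=
  (forall x y, 0 <= d x y) /\
  (forall x y, d x y = 0 <-> x = y) /\
  (forall x y, d x y = d y x) /\
  (forall x y z, d x z <= d x y + d y z).

Definition CRR_condition {X : Type} (d : X -> X -> R) (T : X -> X) (a b c : R) : Prop :=
  forall x y, d (T x) (T y) <= a * d x y + b * d x (T x) + c * d y (T y).

Definition generalized_CRR {X : Type} (d : X -> X -> R) (T : X -> X) : Prop :=
  exists alpha lambda : R,
    0 <= alpha /\ 0 <= lambda /\ 2 * alpha + 3 * lambda / 2 < 1 /\
    forall x y z, x <> y -> y <> z -> x <> z ->
      d (T x) (T y) + d (T y) (T z) + d (T x) (T z)
      <= alpha * (d x y + d y z + d z x)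
         + lambda * (d x (T x) + d y (T y) + d z (T z)).

From Stdlib Require Import Reals Lra.
Open Scope R_scope.

(* Averaging the Ćirić–Reich–Rus inequality for (x, y) and (y, x) gives a
   symmetric bound with self-distance weight (b + c) / 2; summing it over the
   three pairs of a triple yields the generalized condition with alpha = a and
   lambda = b + c, and 2a + 3(b + c)/2 < 1 is exactly the hypothesis. *)

Lemma CRR_condition_sym {X : Type} (d : X -> X -> R) (T : X -> X) (a b c : R) :
  (forall x y, d x y = d y x) ->
  CRR_condition d T a b c ->
  forall x y,
    d (T x) (T y) <= a * d x y + (b + c) / 2 * (d x (T x) + d y (T y)).
Proof.
  intros d_sym HT x y.
  pose proof (HT x y) as Hxy.
  pose proof (HT y x) as Hyx.
  rewrite (d_sym (T y) (T x)), (d_sym y x) in Hyx.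
  lra.
Qed.

Theorem proposition2p1 (X : Type) (d : X -> X -> R) (T : X -> X) (a b c : R) :
  is_metric d ->
  (exists x y z : X, x <> y /\ y <> z /\ x <> z) ->
  0 <= a -> 0 <= b -> 0 <= c ->
  2 * a + 3 / 2 * (b + c) < 1 ->
  CRR_condition d T a b c ->
  generalized_CRR d T.
Proof.
  intros [_ [_ [d_sym _]]] _ Ha Hb Hc Hconst HT.
  exists a, (b + c).
  repeat split; try lra.
  intros x y z _ _ _.
  pose proof (CRR_condition_sym d T a b c d_sym HT x y) as Hxy.
  pose proof (CRR_condition_sym d T a b c d_sym HT y z) as Hyz.
  pose proof (CRR_condition_sym d T a b c d_sym HT x z) as Hxz.
  rewrite (d_sym z x).
  lra.
Qed.
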